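(* Let $Q^n$ and $Q^{n-1}$ be matrix-valued grid functions satisfying the boundary conditions whose values are symmetric and trace-free, and let $r^n$ be a real grid function. Suppose that $Q^{n+1}$ (a grid function of real $3\times3$ matrices satisfying the boundary conditions) and $r^{n+1}$ (a real grid function) satisfy, for all $(i,j,k)\in\{1,\dots,N\}^3$, $\frac{Q^{n+1}_{ijk}-Q^n_{ijk}}{\Delta t}=M\Big(L_1\Delta_hQ^{n+\frac12}_{ijk}-r^{n+\frac12}_{ijk}\overline P^{n+\frac12}_{ijk}+\frac{L_2+L_3}{2}\cdot\frac{\alpha_h(Q^{n+1})_{ijk}+\alpha_h(Q^n)_{ijk}}{2}\Big)$ and $r^{n+1}_{ijk}-r^n_{ijk}=\overline P^{n+\frac12}_{ijk}:(Q^{n+1}_{ijk}-Q^n_{ijk})$, where $f^{n+\frac12}=\frac12(f^{n+1}+f^n)$ and $\overline P^{n+\frac12}_{ijk}=\frac32P(Q^n_{ijk})-\frac12P(Q^{n-1}_{ijk})$. Then $Q^{n+1}_{ijk}$ is symmetric and trace-free for all $(i,j,k)$.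
   Context: Parameters: $a,b\in\mathbb{R}$, $c,L_1,L_2,L_3,M>0$, $\Delta t>0$, and $A_0>0$ such that $\inf\{\frac a2\operatorname{tr}(Q^2)-\frac b3\operatorname{tr}(Q^3)+\frac c4(\operatorname{tr}(Q^2))^2+A_0:\ Q\in\mathbb{R}^{3\times3}\text{ symmetric}\}>0$. For symmetric $Q$ let $r(Q)=\sqrt{2(\frac a2\operatorname{tr}(Q^2)-\frac b3\operatorname{tr}(Q^3)+\frac c4(\operatorname{tr}(Q^2))^2+A_0)}$, $S(Q)=aQ-b(Q^2-\frac13\operatorname{tr}(Q^2)I)+c\operatorname{tr}(Q^2)Q$, $P(Q)=S(Q)/r(Q)$; $A:B=\sum_{i,j}A_{ij}B_{ij}$. Grid: $N\in\mathbb{N}$, $h=1/(N+1)$. Grid functions are families $(f_{ijk})_{(i,j,k)\in\mathbb{Z}^3}$ of scalars or real $3\times3$ matrices; the boundary conditions mean $f_{ijk}=0$ whenever $(i,j,k)\notin\{1,\dots,N\}^3$. $D^\pm_1f_{ijk}=\pm(f_{i\pm1,j,k}-f_{ijk})/h$, $D^c_1f_{ijk}=(f_{i+1,j,k}-f_{i-1,j,k})/(2h)$, and analogously $D^\pm_2,D^c_2$ (shift in $j$), $D^\pm_3,D^c_3$ (shift in $k$). $\Delta_hf=\sum_{\alpha=1}^3D^-_\alpha D^+_\alpha f$, $\alpha_h(Q)_{ws}=\sum_{\beta=1}^3[D^c_wD^c_\beta Q_{s\beta}+D^c_sD^c_\beta Q_{w\beta}]-\frac23\sum_{\beta,\gamma=1}^3D^c_\beta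 D^c_\gamma Q_{\beta\gamma}\delta_{ws}$. *)

From HB Require Import structures.
From mathcomp Require Import all_boot all_order all_algebra.
From mathcomp Require Import classical_sets reals.
Set Implicit Arguments. Unset Strict Implicit. Unset Printing Implicit Defensive.
Import Order.TTheory GRing.Theory Num.Theory.
Local Open Scope ring_scope.

Section Grid.
Variable R : realType.

Definition gridfun (V : Type) := int -> int -> int -> V.

Definition in_range (N : nat) (i : int) : bool := (1 <= i) && (i <= N%:Z).
Definition in_grid (N : nat) (i j k : int) : bool :=
  [&& in_range N i, in_range N j & in_range N k].
Definition bc {V : zmodType} (N : nat) (f : gridfun V) : Prop :=
  forall i j k, ~~ in_grid N i j k -> f i j k = 0.

Definition meshsize (N : nat) : R := (N.+1%:R)^-1.

(* shift by s in direction al (al = 0,1,2 corresponds to directions 1,2,3) *)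
Definition shift {V : Type} (al : 'I_3) (s : int) (f : gridfun V) : gridfun V :=
  fun i j k =>
    if val al == 0%N then f (i + s) j k
    else if val al == 1%N then f i (j + s) k
    else f i j (k + s).

Variable V : lmodType R.

Definition Dp (N : nat) (al : 'I_3) (f : gridfun V) : gridfun V :=
  fun i j k => (meshsize N)^-1 *: (shift al 1 f i j k - f i j k).
Definition Dm (N : nat) (al : 'I_3) (f : gridfun V) : gridfun V :=
  fun i j k => (meshsize N)^-1 *: (f i j k - shift al (-1) f i j k).
Definition Dc (N : nat) (al : 'I_3) (f : gridfun V) : gridfun V :=
  fun i j k => (2 * meshsize N)^-1 *: (shift al 1 f i j k - shift al (-1) f i j k).

Definition lap_h (N : nat) (f : gridfun V) : gridfun V :=
  fun i j k => \sum_(al < 3) Dm N al (Dp N al f) i j k.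

End Grid.

Section Alpha.
Variable R : realType.

Definition comp (Q : gridfun 'M[R]_3) (s b : 'I_3) : gridfun R :=
  fun i j k => Q i j k s b.

Definition alpha_h (N : nat) (Q : gridfun 'M[R]_3) : gridfun 'M[R]_3 :=
  fun i j k => \matrix_(w < 3, s < 3)
    ((\sum_(be < 3) (Dc (V := R^o) N w (Dc (V := R^o) N be (comp Q s be)) i j k
                   + Dc (V := R^o) N s (Dc (V := R^o) N be (comp Q w be)) i j k))
     - 2 / 3 * (\sum_(be < 3) \sum_(ga < 3)
                   Dc (V := R^o) N be (Dc (V := R^o) N ga (comp Q be ga)) i j k)
       * (w == s)%:R).

Definition bulk (a b c A0 : R) (Q : 'M[R]_3) : R :=
  a / 2 * \tr (Q *m Q) - b / 3 * \tr (Q *m Q *m Q) + c / 4 * (\tr (Q *m Q)) ^+ 2 + A0.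
Definition rfun (a b c A0 : R) (Q : 'M[R]_3) : R := Num.sqrt (2 * bulk a b c A0 Q).
Definition Sfun (a b c : R) (Q : 'M[R]_3) : 'M[R]_3 :=
  a *: Q - b *: (Q *m Q - (1/3 * \tr (Q *m Q)) *: 1%:M) + (c * \tr (Q *m Q)) *: Q.
Definition Pfun (a b c A0 : R) (Q : 'M[R]_3) : 'M[R]_3 :=
  (rfun a b c A0 Q)^-1 *: Sfun a b c Q.

Definition frob (A B : 'M[R]_3) : R := \sum_(i < 3) \sum_(j < 3) A i j * B i j.

Definition symtf (Q : 'M[R]_3) : Prop := Q^T = Q /\ \tr Q = 0.

End Alpha.

From HB Require Import structures.
From mathcomp Require Import all_boot all_order all_algebra.
From mathcomp Require Import classical_sets reals.
From mathcomp Require Import ring lra.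
Import Order.TTheory GRing.Theory Num.Theory.
Local Open Scope ring_scope.

(* Let phi be a linear functional vanishing on symmetric trace-free matrices
   (an entry of the antisymmetric part, or the trace).  P and alpha_h take
   values in that subspace, so applying phi to the scheme removes the coupling
   term and both alpha_h terms, and w = phi (Q^{n+1/2}) = phi (Q^{n+1}) / 2
   solves w = (dt M L1 / 2) Delta_h w with zero boundary values.  The discrete
   maximum principle forces w = 0. *)

Section GridOperators.
Variable R : realType.

Lemma shift_map (A B : Type) (g : A -> B) al s (u : gridfun A) i j k :
  shift al s (fun i j k => g (u i j k)) i j k = g (shift al s u i j k).
Proof. by rewrite /shift; case: ifP => _; [|case: ifP]. Qed.

Lemma Dp_scalar (V : lmodType R) (phi : {scalar V}) N al (u : gridfun V) i j k :
  phi (Dp N al u i j k) = Dp (V := R^o) N al (fun i j k => phi (u i j k)) i j k.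
Proof. by rewrite /Dp shift_map linearZ linearB. Qed.

Lemma lap_h_scalar (V : lmodType R) (phi : {scalar V}) N (u : gridfun V) i j k :
  phi (lap_h N u i j k) = lap_h (V := R^o) N (fun i j k => phi (u i j k)) i j k.
Proof.
rewrite /lap_h linear_sum; apply: eq_bigr => al _.
rewrite /Dm linearZ linearB /shift.
by case: ifP => _; [|case: ifP => _]; rewrite !Dp_scalar.
Qed.

End GridOperators.

Section MaximumPrinciple.
Variables (R : realType) (N : nat).

Lemma in_range_ord {i} : in_range N i -> exists n : 'I_N.+1, i = n%:Z.
Proof.
case/andP=> i_ge1 i_leN; have i_ge0 : 0 <= i by apply: le_trans i_ge1.
have absi : i = `|i|%N%:Z by rewrite abszE ger0_norm.
have lt_absi : (`|i| < N.+1)%N by rewrite ltnS -lez_nat -absi.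
by exists (Ordinal lt_absi).
Qed.

Lemma bc_norm_argmax {u : gridfun R} : bc N u ->
  exists i j k, forall i' j' k', `|u i' j' k'| <= `|u i j k|.
Proof.
move=> bc_u; pose G (p : 'I_N.+1 * 'I_N.+1 * 'I_N.+1) := `|u p.1.1%:Z p.1.2%:Z p.2%:Z|.
case: (@arg_maxP _ _ _ (ord0, ord0, ord0) xpredT G isT) => [[[n1 n2] n3] _ G_max].
exists n1%:Z, n2%:Z, n3%:Z => i j k; have [/and3P[gi gj gk]|off] := boolP (in_grid N i j k).
  have [[m1 ->] [m2 ->] [m3 ->]] := And3 (in_range_ord gi) (in_range_ord gj) (in_range_ord gk).
  exact: (G_max (m1, m2, m3)).
by rewrite bc_u // normr0.
Qed.

Lemma lap_h_scalarE (u : gridfun R) i j k :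
  lap_h (V := R^o) N u i j k = (meshsize R N)^-2 *
    (\sum_(al < 3) (shift al 1 u i j k + shift al (-1) u i j k) - 6 * u i j k).
Proof.
rewrite /lap_h !big_ord_recr !big_ord0 /= /Dm /Dp /shift /= !addrNK.
by rewrite /GRing.scale /= -exprVn; ring.
Qed.

Lemma dominated_fixpoint_eq0 (x s k : R) (n : nat) :
  0 <= k -> `|s| <= n%:R * `|x| -> x = k * (s - n%:R * x) -> x = 0.
Proof.
move=> k_ge0 s_le x_eq; apply/normr0_eq0.
have gain_ge0 : 0 <= 1 + n%:R * k by rewrite addr_ge0 ?mulr_ge0.
have x_gain : x * (1 + n%:R * k) = k * s by rewrite mulrDr mulr1 {1}x_eq; ring.
have : `|x| * (1 + n%:R * k) = k * `|s|.
  by rewrite -(ger0_norm gain_ge0) -normrM x_gain normrM ger0_norm.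
have := normr_ge0 x; nra.
Qed.

Lemma max_principle_lap_h (kap : R) (u : gridfun R) : 0 <= kap -> bc N u ->
  (forall i j k, in_grid N i j k -> u i j k = kap * lap_h (V := R^o) N u i j k) ->
  forall i j k, u i j k = 0.
Proof.
move=> kap_ge0 bc_u u_eq; have [i [j [k u_max]]] := bc_norm_argmax bc_u.
suff u0 : u i j k = 0.
  move=> i' j' k'; apply/normr0_eq0/le_anti.
  by rewrite normr_ge0 andbT -(normr0 R) -u0 u_max.
have [ongrid|offgrid] := boolP (in_grid N i j k); last by rewrite bc_u.
have shift_le al s : `|shift al s u i j k| <= `|u i j k|.
  by rewrite /shift; case: ifP => _; [|case: ifP => _]; apply: u_max.
apply: (@dominated_fixpoint_eq0 _ (\sum_(al < 3) (shift al 1 u i j k + shift al (-1) u i j k))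
          (kap * (meshsize R N)^-2) 6).
- by rewrite mulr_ge0 // invr_ge0 exprn_ge0 // invr_ge0 ler0n.
- apply: le_trans (ler_norm_sum _ _ _) _.
  rewrite (_ : 6%:R * _ = \sum_(al < 3) `|u i j k| *+ 2); last first.
    by rewrite sumr_const card_ord -mulrnA mulr_natl.
  by apply: ler_sum => al _; apply: le_trans (ler_normD _ _) _; rewrite mulr2n lerD.
- by rewrite -mulrA -lap_h_scalarE; apply: u_eq.
Qed.

End MaximumPrinciple.

Section CrankNicolsonKernel.
Variables (R : realType) (V : lmodType R) (phi : {scalar V}).
Variables (N : nat) (dt kap : R) (U0 U1 : gridfun V).
Hypotheses (dt_gt0 : 0 < dt) (kap_ge0 : 0 <= kap) (bcU0 : bc N U0) (bcU1 : bc N U1).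
Hypothesis phiU0 : forall i j k, phi (U0 i j k) = 0.
Hypothesis phi_step : forall i j k, in_grid N i j k ->
  phi (dt^-1 *: (U1 i j k - U0 i j k)) =
  kap * phi (lap_h N (fun i j k => 2^-1 *: (U1 i j k + U0 i j k)) i j k).

Lemma crank_nicolson_kernel i j k : phi (U1 i j k) = 0.
Proof.
pose w i j k := phi (2^-1 *: (U1 i j k + U0 i j k)).
have wE i' j' k' : w i' j' k' = 2^-1 * phi (U1 i' j' k').
  by rewrite /w linearZ linearD phiU0 addr0.
have w0 : forall i j k, w i j k = 0.
  apply: (@max_principle_lap_h _ N (dt * kap / 2)).
  - by rewrite divr_ge0 // mulr_ge0 // ltW.
  - by move=> i' j' k' off; rewrite /w bcU0 // bcU1 // addr0 scaler0 linear0.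
  move=> i' j' k' /phi_step; rewrite lap_h_scalar -/w linearZ linearB phiU0 subr0 /= => step.
  rewrite wE; have -> : phi (U1 i' j' k') = dt * (kap * lap_h (V := R^o) N w i' j' k').
    by rewrite -step mulrA mulfV ?mul1r // gt_eqF.
  by ring.
by have /eqP := w0 i j k; rewrite wE mulf_eq0 invr_eq0 pnatr_eq0 => /eqP.
Qed.

End CrankNicolsonKernel.

Section SymmetricTraceFree.
Variable R : realType.
Implicit Types (A B Q : 'M[R]_3) (x : R).

Lemma symtfD A B : symtf A -> symtf B -> symtf (A + B).
Proof.
by rewrite /symtf => -[symA trA] [symB trB]; rewrite !linearD /= symA symB trA trB addr0.
Qed.

Lemma symtfZ x A : symtf A -> symtf (x *: A).
Proof. by rewrite /symtf => -[symA trA]; rewrite !linearZ /= symA trA mulr0. Qed.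

Lemma symtfN A : symtf A -> symtf (- A).
Proof. by move=> stA; rewrite -scaleN1r; apply: symtfZ. Qed.

Lemma symtf_deviator A : A^T = A -> symtf (A - (1/3 * \tr A) *: 1%:M).
Proof.
move=> symA; split; first by rewrite linearB linearZ /= tr_scalar_mx symA.
by rewrite linearB linearZ /= mxtrace1; field.
Qed.

Lemma Pfun_symtf (a b c A0 : R) Q : symtf Q -> symtf (Pfun a b c A0 Q).
Proof.
move=> stQ; have symQ2 : (Q *m Q)^T = Q *m Q by rewrite trmx_mul stQ.1.
apply/symtfZ/symtfD; last exact: symtfZ.
by apply: symtfD; [apply: symtfZ | apply/symtfN/symtfZ/symtf_deviator].
Qed.

Lemma alpha_h_symtf N (Q : gridfun 'M[R]_3) i j k : symtf (alpha_h N Q i j k).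
Proof.
split.
  apply/matrixP => s t; rewrite !mxE eq_sym; congr (_ - _).
  by apply: eq_bigr => be _; rewrite addrC.
rewrite /mxtrace; under eq_bigr do rewrite mxE eqxx mulr1 big_split.
rewrite sumrB big_split sumr_const card_ord /= -[X in _ - X]mulr_natr.
by field.
Qed.

Definition skew_entry (s t : 'I_3) A : R := A s t - A t s.

Fact skew_entry_is_scalar s t : scalar (skew_entry s t).
Proof. by move=> x A B; rewrite /skew_entry !mxE; ring. Qed.
HB.instance Definition _ s t :=
  GRing.isLinear.Build R 'M[R]_3 R *%R (skew_entry s t) (skew_entry_is_scalar s t).

Lemma symtfP Q : symtf Q <-> (forall s t, skew_entry s t Q = 0) /\ \tr Q = 0.
Proof.
split=> [[symQ trQ]|[skewQ trQ]]; split=> //.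
  by move=> s t; rewrite /skew_entry -[in Q s t]symQ mxE subrr.
by apply/matrixP => s t; rewrite mxE; apply/eqP; rewrite -subr_eq0; apply/eqP/skewQ.
Qed.

End SymmetricTraceFree.

Local Open Scope classical_set_scope.

Theorem proposition4p4 (R : realType) (a b c L1 L2 L3 M dt A0 : R)
  (hc : 0 < c) (hL1 : 0 < L1) (hL2 : 0 < L2) (hL3 : 0 < L3) (hM : 0 < M)
  (hdt : 0 < dt) (hA0 : 0 < A0)
  (hinf : 0 < inf [set bulk a b c A0 Q | Q in [set Q : 'M[R]_3 | Q^T = Q]])
  (N : nat)
  (Qn Qnm1 Qn1 : gridfun 'M[R]_3) (rn rn1 : gridfun R)
  (bcQn : bc N Qn) (bcQnm1 : bc N Qnm1) (bcQn1 : bc N Qn1)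
  (stQn : forall i j k, symtf (Qn i j k))
  (stQnm1 : forall i j k, symtf (Qnm1 i j k))
  (eqQ : forall i j k, in_grid N i j k ->
     dt^-1 *: (Qn1 i j k - Qn i j k) =
     M *: (L1 *: lap_h N (fun i j k => 2^-1 *: (Qn1 i j k + Qn i j k)) i j k
           - (2^-1 * (rn1 i j k + rn i j k)) *:
               (3/2 *: Pfun a b c A0 (Qn i j k) - 1/2 *: Pfun a b c A0 (Qnm1 i j k))
           + ((L2 + L3) / 2) *: (2^-1 *: (alpha_h N Qn1 i j k + alpha_h N Qn i j k))))
  (eqr : forall i j k, in_grid N i j k ->
     rn1 i j k - rn i j k =
     frob (3/2 *: Pfun a b c A0 (Qn i j k) - 1/2 *: Pfun a b c A0 (Qnm1 i j k))
          (Qn1 i j k - Qn i j k)) :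
  forall i j k, symtf (Qn1 i j k).
Proof.
have kernel (phi : {scalar 'M[R]_3}) : (forall A, symtf A -> phi A = 0) ->
    forall i j k, phi (Qn1 i j k) = 0.
  move=> phi_symtf.
  apply: (@crank_nicolson_kernel _ _ phi N dt (M * L1) Qn Qn1 hdt _ bcQn bcQn1).
  - by rewrite mulr_ge0 // ltW.
  - by move=> i j k; apply: phi_symtf.
  move=> i j k ongrid; rewrite eqQ // -addrA.
  set Y := _ *: (_ - _); set Z := _ *: (2^-1 *: _).
  rewrite linearZ linearD linearZ /= (phi_symtf (- Y + Z)) ?addr0 ?mulrA //.
  apply: symtfD; first by apply/symtfN/symtfZ/symtfD; [|apply/symtfN]; apply/symtfZ/Pfun_symtf.
  by apply/symtfZ/symtfZ/symtfD; apply: alpha_h_symtf.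
move=> i j k; apply/symtfP; split=> [s t|]; apply: kernel => A /symtfP[skewA trA] //.
exact: skewA.
Qed.
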